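(* Let $(q_i,P_i)_{i\in\mathcal I}$ be a mechanism with finite message sets $M_i$ and opt-out messages, let $\alpha_i(m_i'\mid m_i)\ge0$ be nonnegative numbers, and let $\epsilon>0$. Then there exist $a>0$, an integer $k\ge1$ and a mechanism $(\tilde q_i,\tilde P_i)_{i\in\mathcal I}$ with message sets $\tilde M_i=\{0,1,\ldots,k\}$ for every $i$ (with $0$ the opt-out message), such that, with the dual variables $\tilde\alpha_i(j'\mid j)=a$ if $j'=j+1$ and $\tilde\alpha_i(j'\mid j)=0$ otherwise, the virtual revenue $\widetilde{\mathrm{Rev}}$ of $(\tilde q_i,\tilde P_i,\tilde\alpha_i)$ satisfies $$\widetilde{\mathrm{Rev}}(v,\tilde m)\ge\min_{m\in M}\mathrm{Rev}(v,m)-I\epsilon\quad\text{for all }v\in V,\ \tilde m\in\prod_i\tilde M_i,$$ where $\mathrm{Rev}$ is the virtual revenue of $(q_i,P_i,\alpha_i)$. Moreover, if a mechanism with $M_i=\{0,\ldots,k\}$ for all $i$ is paired with such $\tilde\alpha_i$ (the same for all $i$), then its symmetrization $\tilde q_1(m')=\frac1{I!}\sum_\sigma q_{\sigma(1)}(m_{\sigma(1)}=m_1',\ldots,m_{\sigma(I)}=m_I')$ (and similarly for payments and other buyers, summing over permutations $\sigma$ of $\{1,\ldots,I\}$) has virtual revenue at least $\min_m\mathrm{Rev}(v,m)$ at every $(v,m)$.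
   Context: A mechanism for buyers $\mathcal I=\{1,\ldots,I\}$ with common value $v\in V=\{0,\nu,\ldots,1\}$ consists of finite message sets $M_i$ ($M=\prod_iM_i$), allocation rules $q_i:M\to[0,1]$ with $\sum_iq_i(m)\le1$, and payment rules $P_i:M\to\mathbb R$, where each $M_i$ contains an opt-out message $0$ with $q_i(0,m_{-i})=P_i(0,m_{-i})=0$ for all $m_{-i}$. $U_i(v,m)=v\,q_i(m)-P_i(m)$. Virtual revenue associated with nonnegative numbers $\alpha_i(m_i'\mid m_i)$: $\mathrm{Rev}(v,m)=\sum_i\Big(P_i(m)+\sum_{m_i'\in M_i}\big(U_i(v,(m_i',m_{-i}))-U_i(v,m)\big)\alpha_i(m_i'\mid m_i)\Big)$. *)

From HB Require Import structures.
From mathcomp Require Import all_boot all_order fingroup perm all_algebra.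
Set Implicit Arguments. Unset Strict Implicit. Unset Printing Implicit Defensive.
Import Order.TTheory GRing.Theory Num.Theory.
Local Open Scope ring_scope.

Section Mech.
Variables (R : archiRealFieldType) (n : nat) (M : 'I_n -> finType)
  (o : forall i, M i).

Definition profile := {dffun forall i : 'I_n, M i}.

Definition optout : profile := finfun o.

Definition upd (m : profile) (i : 'I_n) (x : M i) : profile :=
  finfun (dfwith (fun j => m j) x).

Definition is_mechanism (q P : 'I_n -> profile -> R) : Prop :=
  [/\ (forall i m, 0 <= q i m <= 1),
      (forall m, \sum_(i < n) q i m <= 1) &
      (forall i (m : profile), m i = o i -> q i m = 0 /\ P i m = 0)].

Definition util (q P : 'I_n -> profile -> R) (i : 'I_n) (v : R) (m : profile) : R :=
  v * q i m - P i m.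

(* alpha i x y = alpha_i(x | y) *)
Definition virtual_revenue (q P : 'I_n -> profile -> R)
    (alpha : forall i, M i -> M i -> R) (v : R) (m : profile) : R :=
  \sum_(i < n) (P i m + \sum_(x : M i)
       (util q P i v (@upd m i x) - util q P i v m) * alpha i x (m i)).

(* min_{m in M} Rev(v, m)  (M is nonempty since it contains optout) *)
Definition min_revenue (q P : 'I_n -> profile -> R)
    (alpha : forall i, M i -> M i -> R) (v : R) : R :=
  \big[Num.min/virtual_revenue q P alpha v optout]_(m : profile)
     virtual_revenue q P alpha v m.

End Mech.

Definition Mk (n k : nat) : 'I_n -> finType := fun _ => 'I_k.+1.
Arguments Mk : clear implicits.
Definition ok0 (n k : nat) : forall i : 'I_n, Mk n k i := fun _ => ord0.
Arguments ok0 : clear implicits.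

Definition alpha_succ (R : archiRealFieldType) (n k : nat) (a : R) :
    forall i : 'I_n, Mk n k i -> Mk n k i -> R :=
  fun _ (j' j : 'I_k.+1) => if (j' : nat) == j.+1 then a else 0.

Definition inV (R : archiRealFieldType) (N : nat) (v : R) : Prop :=
  exists j : 'I_N.+1, v = j%:R / N%:R.

(* symmetrization: f~_i(m') = 1/n! sum_sigma f_{sigma(i)}(m' o sigma^-1),
   i.e. the profile m with m_{sigma(j)} = m'_j *)
Definition symmetrize (R : archiRealFieldType) (n k : nat)
    (f : 'I_n -> profile (Mk n k) -> R) : 'I_n -> profile (Mk n k) -> R :=
  fun i m' => (n`!%:R)^-1 *
    \sum_(s : 'S_n) f (s i) (finfun (fun j : 'I_n => (m' : profile (Mk n k)) ((s^-1)%g j))).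

(* A ladder message j of buyer i stands for a random original message with law
   ((I + K) / 2)^j applied to the opt-out message, where
   K y z = 2 alpha(z|y) / a + [z = y] (1 - 2 sum_x alpha(x|y) / a)
   is a Markov kernel once a >= 2 sum_x alpha(x|y); buyers draw independently and the
   ladder mechanism pays out the expected allocations and payments.  Since
   a ((I + K) / 2 - I) = alpha - diag (sum_x alpha(x|.)), the deviation term
   a (U(j+1) - U(j)) of the new virtual revenue is exactly the expected deviation term
   of the old one, so the new virtual revenue is an average of old ones -- except at the
   top rung k, which has no upward deviation.  There the error is a times the change of
   an expected utility between rungs k and k+1; as ((I + K) / 2)^j is a Bin(j, 1/2)
   mixture of the powers K^l, this change is bounded by the total variation between
   Bin(2m+1, 1/2) and Bin(2m, 1/2), namely C(2m, m) / 4^m <= 1 / sqrt(m + 1), which is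
   small for k = 2m large.  Symmetrization averages the virtual revenue over relabelings
   of the buyers, each of which is a virtual revenue of the original mechanism. *)

From mathcomp Require Import all_boot all_order fingroup perm all_algebra.
From mathcomp Require Import ring zify.
Import Order.TTheory GRing.Theory Num.Theory.

Local Open Scope ring_scope.

Section Profiles.
Variables (n : nat) (M : 'I_n -> finType).
Implicit Types m : profile M.

Lemma updE m i (x : M i) : upd m x i = x.
Proof. by rewrite /upd ffunE dfwith_in. Qed.

Lemma updO m i (x : M i) j : i != j -> upd m x j = m j.
Proof. by move=> ij; rewrite /upd ffunE dfwith_out. Qed.

Lemma upd_id m i : upd m (m i) = m.
Proof.
apply/ffunP => j; rewrite ffunE.
by case: (eqVneq i j) => [<-|ij]; rewrite ?dfwith_in ?dfwith_out.
Qed.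

Lemma upd_upd m i (x y : M i) : upd (upd m x) y = upd m y.
Proof.
apply/ffunP => j; rewrite /upd !ffunE.
by case: (eqVneq i j) => [<-|ij]; rewrite ?dfwith_in // !dfwith_out // ffunE dfwith_out.
Qed.

(* (m, x) |-> (m with x at i, m i) is an involution of profile M * M i. *)
Lemma sum_upd_swap (V : nmodType) i (G : profile M -> M i -> V) :
  \sum_m \sum_(x : M i) G m x = \sum_m \sum_(z : M i) G (upd m z) (m i).
Proof.
rewrite !pair_bigA /=.
pose swap (p : profile M * M i) := (upd p.1 p.2, p.1 i).
have swapK : involutive swap by case=> m x; rewrite /swap /= upd_upd upd_id updE.
by rewrite (reindex_inj (inv_inj swapK)).
Qed.

Lemma sum_profile_prod (R : comPzSemiRingType) (f : forall i, M i -> R) :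
  \sum_(m : profile M) \prod_(i < n) f i (m i) = \prod_(i < n) \sum_(y : M i) f i y.
Proof.
pose F i := [ffun y : M i => f i y].
rewrite (reindex (@dffun_of_fprod _ M)); last exact/onW_bij/dffun_of_fprod_bij.
transitivity (\sum_(t : fprod M) \prod_(i < n) F i (t i)).
  by apply: eq_bigr => t _; apply: eq_bigr => i _; rewrite !ffunE.
rewrite big_fprod.
rewrite -(bigA_distr_big_dep (fun i => tagged_with M i) (fun i j => untag 0 (F i) j)).
apply: eq_bigr => i _; rewrite (big_tag (fun i y => f i y)); apply: eq_bigr => x _.
by rewrite /untag; case: eqP => // e; rewrite ffunE.
Qed.

End Profiles.

Arguments upd_id {n M} m i.
Arguments sum_upd_swap {n M V} i G.
Arguments sum_profile_prod {n M R} f.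

Lemma bin_double_le_succ m l : (l < m)%N -> ('C(2 * m, l) <= 'C(2 * m, l.+1))%N.
Proof.
move=> lm; rewrite -(leq_pmul2l (ltn0Sn l)) mul_bin_left leq_mul2r.
by apply/orP; right; lia.
Qed.

Lemma bin_double_succ_le m l : (m <= l)%N -> ('C(2 * m, l.+1) <= 'C(2 * m, l))%N.
Proof.
move=> ml; rewrite -(leq_pmul2l (ltn0Sn l)) mul_bin_left leq_mul2r.
by apply/orP; right; lia.
Qed.

Lemma mul_bin_central m : (m.+1 * 'C(2 * m.+1, m.+1) = 2 * (2 * m).+1 * 'C(2 * m, m))%N.
Proof.
have h1 := mul_bin_diag (2 * m.+1) m.
have h2 := mul_bin_diag (2 * m).+1 m.
have sym : 'C((2 * m).+1, m.+1) = 'C((2 * m).+1, m).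
  by rewrite -(bin_sub (_ : m <= (2 * m).+1)%N); [congr binomial; lia | lia].
rewrite (_ : (2 * m.+1).-1 = (2 * m).+1) in h1; last by lia.
by rewrite /= sym in h2; rewrite -h1; nia.
Qed.

Lemma bin_central_sq_le m : ('C(2 * m, m) ^ 2 * m.+1 <= 16 ^ m)%N.
Proof.
elim: m => [|m IH]; first by rewrite muln0 bin0.
set X := 'C(2 * m, m) in IH *; set Y := 'C(2 * m.+1, m.+1).
have rec := mul_bin_central m; rewrite -/X -/Y in rec.
suff : (Y ^ 2 * m.+2 * m.+1 ^ 3 <= 16 ^ m.+1 * m.+1 ^ 3)%N.
  by rewrite leq_pmul2r // expn_gt0.
have -> : (Y ^ 2 * m.+2 * m.+1 ^ 3 = (X ^ 2 * m.+1) * (4 * (2 * m).+1 ^ 2 * m.+2))%N.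
  have -> : (Y ^ 2 * m.+2 * m.+1 ^ 3 = (m.+1 * Y) ^ 2 * m.+2 * m.+1)%N by ring.
  by rewrite rec; ring.
have -> : (16 ^ m.+1 * m.+1 ^ 3 = 16 ^ m * (16 * m.+1 ^ 3))%N by rewrite expnS; ring.
apply: leq_mul IH _; nia.
Qed.

Definition binom_weight (R : numFieldType) (j l : nat) : R := 'C(j, l)%:R / (2 ^ j)%:R.

Lemma binom_weightS (R : numFieldType) j l :
  binom_weight R j.+1 l.+1 = (binom_weight R j l.+1 + binom_weight R j l) / 2.
Proof. by rewrite /binom_weight binS natrD expnS natrM; field; rewrite pnatr_eq0 expn_eq0. Qed.

Lemma binom_weightS0 (R : numFieldType) j : binom_weight R j.+1 0 = binom_weight R j 0 / 2.
Proof. by rewrite /binom_weight !bin0 expnS natrM; field; rewrite pnatr_eq0 expn_eq0. Qed.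

Lemma binom_weight_small (R : numFieldType) j l : (j < l)%N -> binom_weight R j l = 0.
Proof. by move=> jl; rewrite /binom_weight bin_small // mul0r. Qed.

Definition binom_tv (R : numFieldType) (j : nat) : R :=
  \sum_(l < j.+2) `|binom_weight R j.+1 l - binom_weight R j l|.

(* By Pascal's rule the l-th term is |C(2m, l-1) - C(2m, l)|; unimodality makes the
   two halves telescope. *)
Lemma sum_abs_binS_sub (R : numFieldType) m :
  \sum_(l < (2 * m).+2) `|'C((2 * m).+1, l)%:R - 2 * 'C(2 * m, l)%:R|
  = 2 * 'C(2 * m, m)%:R :> R.
Proof.
set g := fun l => 'C(2 * m, l)%:R : R.
rewrite big_ord_recl /= bin0.
have -> : \sum_(i < (2 * m).+1)
    `|'C((2 * m).+1, bump 0 i)%:R - 2 * 'C(2 * m, bump 0 i)%:R|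
    = \sum_(0 <= i < (2 * m).+1) `|g i - g i.+1| :> R.
  rewrite big_mkord; apply: eq_bigr => i _; rewrite /bump /= add1n binS natrD /g.
  by congr `|_|; ring.
rewrite (big_cat_nat (n := m)) /=; [|lia|lia].
have -> : \sum_(0 <= i < m) `|g i - g i.+1| = g m - g 0.
  rewrite -telescope_sumr //; apply: eq_big_nat => i /andP[_ im].
  by rewrite distrC ger0_norm // subr_ge0 ler_nat bin_double_le_succ.
have -> : \sum_(m <= i < (2 * m).+1) `|g i - g i.+1| = g m - g (2 * m).+1.
  rewrite -opprB -telescope_sumr; last by lia.
  rewrite -sumrN; apply: eq_big_nat => i /andP[mi _].
  by rewrite ger0_norm ?opprB // subr_ge0 ler_nat bin_double_succ_le.
rewrite /g bin0 (@bin_small (2 * m) (2 * m).+1) // mulr1 -opprB.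
rewrite (_ : 2 - 1%:R = 1 :> R); last by ring.
by rewrite normrN normr1; ring.
Qed.

Lemma binom_tv_double (R : numFieldType) m :
  binom_tv R (2 * m) = 'C(2 * m, m)%:R / (4 ^ m)%:R.
Proof.
have pos : (0 : R) < (4 ^ m)%:R by rewrite ltr0n expn_gt0.
have nz : (2 * (4 ^ m)%:R : R) != 0 by rewrite mulf_neq0 // gt_eqF.
transitivity (\sum_(l < (2 * m).+2)
   `|'C((2 * m).+1, l)%:R - 2 * 'C(2 * m, l)%:R| / (2 * (4 ^ m)%:R) : R).
  apply: eq_bigr => l _.
  have -> : binom_weight R (2 * m).+1 l - binom_weight R (2 * m) l =
      ('C((2 * m).+1, l)%:R - 2 * 'C(2 * m, l)%:R) * (2 * (4 ^ m)%:R)^-1.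
    by rewrite /binom_weight expnS expnM natrM; field; rewrite gt_eqF.
  by rewrite normrM [`|_^-1|]ger0_norm // invr_ge0 mulr_ge0 // ltW.
by rewrite -mulr_suml sum_abs_binS_sub; field; rewrite gt_eqF.
Qed.

Lemma bin_central_ratio_sq_le (R : numFieldType) m :
  ('C(2 * m, m)%:R / (4 ^ m)%:R) ^+ 2 * m.+1%:R <= 1 :> R.
Proof.
rewrite expr_div_n -mulrAC ler_pdivrMr ?exprn_gt0 ?ltr0n ?expn_gt0 // mul1r.
rewrite -natrX -natrM -natrX ler_nat mulnC -expnM (mulnC m 2) expnM.
by rewrite mulnC; apply: bin_central_sq_le.
Qed.


Section LazyChain.
Variables (R : numFieldType) (T : finType) (alpha : T -> T -> R) (o : T) (a : R).
Hypothesis alpha_ge0 : forall x y, 0 <= alpha x y.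
Hypothesis a_gt0 : 0 < a.
Hypothesis a_large : forall y, 2 * \sum_(x : T) alpha x y <= a.

Definition lazy_kernel (y z : T) : R :=
  2 * alpha z y / a + (z == y)%:R * (1 - 2 * (\sum_(x : T) alpha x y) / a).

Lemma lazy_kernel_ge0 y z : 0 <= lazy_kernel y z.
Proof.
rewrite /lazy_kernel addr_ge0 // ?divr_ge0 ?mulr_ge0 ?ler0n ?(ltW a_gt0) //.
by rewrite subr_ge0 ler_pdivrMr // mul1r.
Qed.

Lemma lazy_kernel_drift y (h : T -> R) :
  \sum_z lazy_kernel y z * h z - h y = 2 / a * \sum_z alpha z y * (h z - h y).
Proof.
set S := \sum_(x : T) alpha x y.
under eq_bigr do rewrite /lazy_kernel mulrDl.
rewrite big_split /= -/S.
have -> : \sum_z (z == y)%:R * (1 - 2 * S / a) * h z = (1 - 2 * S / a) * h y.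
  by rewrite (bigD1 y) //= eqxx big1 ?addr0 ?mul1r // => z /negPf ->; rewrite !mul0r.
have -> : 2 / a * \sum_z alpha z y * (h z - h y)
        = \sum_z 2 * alpha z y / a * h z - 2 / a * S * h y.
  by rewrite /S mulr_sumr mulr_sumr mulr_suml -sumrB; apply: eq_bigr => z _; ring.
ring.
Qed.

Lemma lazy_kernel_sum1 y : \sum_z lazy_kernel y z = 1.
Proof.
apply/eqP; rewrite -subr_eq0 -[X in X - _](eq_bigr _ (fun z _ => mulr1 _)).
rewrite (lazy_kernel_drift y (fun=> 1)) big1 ?mulr0 // => z _.
by rewrite subrr mulr0.
Qed.

Fixpoint chain_law (l : nat) : T -> R :=
  if l is l'.+1 then fun z => \sum_y chain_law l' y * lazy_kernel y z
  else fun y => (y == o)%:R.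

Fixpoint binomial_law (j : nat) : T -> R :=
  if j is j'.+1 then fun z => (binomial_law j' z + \sum_y binomial_law j' y * lazy_kernel y z) / 2
  else fun y => (y == o)%:R.

Lemma chain_law_ge0 l y : 0 <= chain_law l y.
Proof.
elim: l y => [|l IH] y /=; first by rewrite ler0n.
by apply: sumr_ge0 => x _; rewrite mulr_ge0 ?lazy_kernel_ge0.
Qed.

Lemma binomial_law_ge0 j y : 0 <= binomial_law j y.
Proof.
elim: j y => [|j IH] y /=; first by rewrite ler0n.
by rewrite divr_ge0 ?addr_ge0 ?sumr_ge0 // => x _; rewrite mulr_ge0 ?lazy_kernel_ge0.
Qed.

Lemma sum_indicator_o : \sum_(y : T) (y == o)%:R = 1 :> R.
Proof. by rewrite (bigD1 o) //= eqxx big1 ?addr0 // => y /negPf ->. Qed.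

Lemma sum_lazy_kernel (f : T -> R) :
  \sum_z \sum_y f y * lazy_kernel y z = \sum_y f y.
Proof.
rewrite exchange_big /=; apply: eq_bigr => y _.
by rewrite -mulr_sumr lazy_kernel_sum1 mulr1.
Qed.

Lemma chain_law_sum1 l : \sum_y chain_law l y = 1.
Proof. by elim: l => [|l IH] /=; rewrite ?sum_indicator_o ?sum_lazy_kernel. Qed.

Lemma binomial_law_sum1 j : \sum_y binomial_law j y = 1.
Proof.
elim: j => [|j IH] /=; first exact: sum_indicator_o.
by rewrite -mulr_suml big_split /= sum_lazy_kernel IH; field.
Qed.

Lemma binomial_lawE j z :
  binomial_law j z = \sum_(l < j.+1) binom_weight R j l * chain_law l z.
Proof.
elim: j z => [|j IH] z.
  by rewrite big_ord1 /binom_weight /= bin0 expn0 divr1 mul1r.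
have step : \sum_y binomial_law j y * lazy_kernel y z
          = \sum_(l < j.+1) binom_weight R j l * chain_law l.+1 z.
  under eq_bigr do rewrite IH mulr_suml.
  rewrite exchange_big /=; apply: eq_bigr => l _.
  by rewrite mulr_sumr; apply: eq_bigr => y _; rewrite mulrA.
rewrite [binomial_law _ _]/= step IH (big_ord_recl j) [in RHS]big_ord_recl.
have shift : \sum_(i < j) binom_weight R j (bump 0 i) * chain_law (bump 0 i) z
            = \sum_(i < j.+1) binom_weight R j i.+1 * chain_law i.+1 z.
  rewrite [in RHS]big_ord_recr /= binom_weight_small // mul0r addr0.
  by apply: eq_bigr => i _; rewrite /bump.
have pascal : \sum_(i < j.+1) binom_weight R j.+1 (bump 0 i) * chain_law (bump 0 i) z
   = (\sum_(i < j.+1) binom_weight R j i.+1 * chain_law i.+1 z) / 2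
     + (\sum_(i < j.+1) binom_weight R j i * chain_law i.+1 z) / 2.
  rewrite !mulr_suml -big_split /=; apply: eq_bigr => i _.
  by rewrite /bump add1n binom_weightS; ring.
rewrite shift pascal binom_weightS0; ring.
Qed.

Lemma binomial_lawS_sub j z :
  binomial_law j.+1 z - binomial_law j z
  = \sum_(l < j.+2) (binom_weight R j.+1 l - binom_weight R j l) * chain_law l z.
Proof.
rewrite !binomial_lawE [X in _ - X](_ : _ = \sum_(l < j.+2) binom_weight R j l * chain_law l z).
  by rewrite -sumrB; apply: eq_bigr => l _; ring.
by rewrite [RHS]big_ord_recr /= binom_weight_small // mul0r addr0.
Qed.

End LazyChain.

Arguments lazy_kernel {R T} alpha a y z.
Arguments chain_law {R T} alpha o a l.
Arguments binomial_law {R T} alpha o a j.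
Arguments lazy_kernel_drift {R T} alpha a y h.

Section ProductLaw.
Variables (R : numFieldType) (n : nat) (M : 'I_n -> finType) (o : forall i, M i)
  (alpha : forall i, M i -> M i -> R) (a : R).
Hypothesis alpha_ge0 : forall i x y, 0 <= alpha i x y.
Hypothesis a_gt0 : 0 < a.
Hypothesis a_large : forall i y, 2 * \sum_(x : M i) alpha i x y <= a.
Implicit Types (t : 'I_n -> nat) (m : profile M) (F : profile M -> R).

Definition coord_law i j : M i -> R := binomial_law (alpha i) (o i) a j.

Definition prod_law t m : R := \prod_(l < n) coord_law l (t l) (m l).

Definition prod_law_but t i m : R := \prod_(l < n | l != i) coord_law l (t l) (m l).

Definition expect_at t i (nu : M i -> R) F : R :=
  \sum_(m : profile M) nu (m i) * prod_law_but t i m * F m.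

Lemma prod_lawE t i m : prod_law t m = coord_law i (t i) (m i) * prod_law_but t i m.
Proof. by rewrite /prod_law (bigD1 i). Qed.

Lemma prod_law_but_upd t i m (z : M i) : prod_law_but t i (upd m z) = prod_law_but t i m.
Proof. by apply: eq_bigr => l li; rewrite updO // eq_sym. Qed.

Lemma prod_law_but_ge0 t i m : 0 <= prod_law_but t i m.
Proof. by apply: prodr_ge0 => l _; apply: binomial_law_ge0. Qed.

Lemma prod_law_ge0 t m : 0 <= prod_law t m.
Proof. by apply: prodr_ge0 => l _; apply: binomial_law_ge0. Qed.

Lemma prod_law_sum1 t : \sum_(m : profile M) prod_law t m = 1.
Proof.
rewrite /prod_law (sum_profile_prod (fun l y => coord_law l (t l) y)) big1 // => l _.
exact: binomial_law_sum1.
Qed.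

Lemma sum_prod_law_but t i (phi : M i -> R) :
  \sum_(m : profile M) phi (m i) * prod_law_but t i m = \sum_(y : M i) phi y.
Proof.
pose g := dfwith (fun l => coord_law l (t l)) phi.
transitivity (\sum_(m : profile M) \prod_(l < n) g l (m l)).
  apply: eq_bigr => m _; rewrite (bigD1 i) //= /g dfwith_in; congr (_ * _).
  by apply: eq_bigr => l li; rewrite dfwith_out // eq_sym.
rewrite sum_profile_prod (bigD1 i) //= /g dfwith_in [X in _ * X]big1 ?mulr1 // => l li.
by rewrite dfwith_out 1?eq_sym // binomial_law_sum1.
Qed.

(* One rung up applies (I + K) / 2 to buyer i's message; only the drift of K survives. *)
Lemma expect_atS_sub t i j F :
  expect_at t i (coord_law i j.+1) F - expect_at t i (coord_law i j) F
  = a^-1 * expect_at t i (coord_law i j)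
      (fun m => \sum_(z : M i) alpha i z (m i) * (F (upd m z) - F m)).
Proof.
pose K := lazy_kernel (alpha i) a.
have move_kernel :
    \sum_(m : profile M) (\sum_(y : M i) coord_law i j y * K y (m i)) * prod_law_but t i m * F m
  = \sum_(m : profile M) coord_law i j (m i) * prod_law_but t i m * \sum_(z : M i) K (m i) z * F (upd m z).
  under eq_bigr do rewrite mulr_suml mulr_suml.
  rewrite (sum_upd_swap i (fun m y => coord_law i j y * K y (m i) * prod_law_but t i m * F m)).
  apply: eq_bigr => m _; rewrite mulr_sumr; apply: eq_bigr => z _.
  by rewrite updE prod_law_but_upd; ring.
rewrite /expect_at -sumrB.
transitivity ((\sum_(m : profile M) (\sum_(y : M i) coord_law i j y * K y (m i)) * prod_law_but t i m * F m
   - \sum_(m : profile M) coord_law i j (m i) * prod_law_but t i m * F m) / 2).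
  by rewrite -sumrB mulr_suml; apply: eq_bigr => m _; rewrite /coord_law /=; field.
rewrite move_kernel -sumrB mulr_suml mulr_sumr; apply: eq_bigr => m _.
have drift := lazy_kernel_drift (alpha i) a (m i) (fun z => F (upd m z)).
rewrite /= upd_id in drift.
rewrite -[\sum_z K (m i) z * _](subrK (F m)) drift.
by field; apply: lt0r_neq0.
Qed.

Lemma expect_atS_sub_le t i j F B : (forall m, `|F m| <= B) ->
  `|expect_at t i (coord_law i j.+1) F - expect_at t i (coord_law i j) F|
  <= B * binom_tv R j.
Proof.
move=> F_le.
pose mu l := chain_law (alpha i) (o i) a l.
have -> : expect_at t i (coord_law i j.+1) F - expect_at t i (coord_law i j) F =
    \sum_(l < j.+2) (binom_weight R j.+1 l - binom_weight R j l) *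
       \sum_(m : profile M) mu l (m i) * prod_law_but t i m * F m.
  rewrite /expect_at -sumrB.
  under eq_bigr => m _ do rewrite -mulrBl -mulrBl binomial_lawS_sub !mulr_suml.
  rewrite exchange_big /=; apply: eq_bigr => l _; rewrite mulr_sumr.
  by apply: eq_bigr => m _; rewrite /mu; ring.
rewrite /binom_tv mulr_sumr; apply: (le_trans (ler_norm_sum _ _ _)).
apply: ler_sum => l _; rewrite normrM mulrC ler_wpM2r //.
apply: (le_trans (ler_norm_sum _ _ _)).
have mu_ge0 m : 0 <= mu l (m i) * prod_law_but t i m.
  by rewrite mulr_ge0 ?prod_law_but_ge0 ?chain_law_ge0.
apply: (@le_trans _ _ (\sum_(m : profile M) mu l (m i) * prod_law_but t i m * B)).
  by apply: ler_sum => m _; rewrite normrM ger0_norm // ler_wpM2l.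
by rewrite -mulr_suml sum_prod_law_but chain_law_sum1 mul1r.
Qed.

End ProductLaw.

Arguments coord_law {R n M} o alpha a i j.
Arguments prod_law {R n M} o alpha a t m.
Arguments prod_law_but {R n M} o alpha a t i m.
Arguments expect_at {R n M} o alpha a t i nu F.
Arguments prod_lawE {R n M o alpha a} t i m.
Arguments prod_law_ge0 {R n M o alpha a} alpha_ge0 a_gt0 a_large t m.
Arguments prod_law_sum1 {R n M} o alpha a t.

Definition buyer_revenue {R : archiRealFieldType} {n : nat} {M : 'I_n -> finType}
    (q P : 'I_n -> profile M -> R) (alpha : forall i, M i -> M i -> R)
    (i : 'I_n) (v : R) (m : profile M) : R :=
  P i m + \sum_(x : M i) (util q P i v (upd m x) - util q P i v m) * alpha i x (m i).

Lemma virtual_revenueE (R : archiRealFieldType) (n : nat) (M : 'I_n -> finType)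
    (q P : 'I_n -> profile M -> R) (alpha : forall i, M i -> M i -> R) v m :
  virtual_revenue q P alpha v m = \sum_i buyer_revenue q P alpha i v m.
Proof. by []. Qed.

Lemma sum_alpha_succ (R : archiRealFieldType) n k (a : R) (i : 'I_n)
    (G : 'I_k.+1 -> R) (j : 'I_k.+1) :
  \sum_(x : 'I_k.+1) G x * @alpha_succ R n k a i x j = if (j < k)%N then G (inord j.+1) * a else 0.
Proof.
rewrite /alpha_succ; case: ltnP => jk.
  rewrite (bigD1 (inord j.+1)) //= inordK // eqxx big1 ?addr0 // => x xj.
  case: eqP => [e|]; last by rewrite mulr0.
  by move: xj; rewrite -(inj_eq val_inj) /= inordK // e eqxx.
rewrite big1 // => x _; case: eqP => [e|]; last by rewrite mulr0.
by have := ltn_ord x; rewrite e; lia.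
Qed.

Section Ladder.
Variables (R : archiRealFieldType) (n : nat) (M : 'I_n -> finType) (o : forall i, M i)
  (alpha : forall i, M i -> M i -> R) (a : R) (k : nat).
Hypothesis alpha_ge0 : forall i x y, 0 <= alpha i x y.
Hypothesis a_gt0 : 0 < a.
Hypothesis a_large : forall i y, 2 * \sum_(x : M i) alpha i x y <= a.
Implicit Types (q P : 'I_n -> profile M -> R) (mt : profile (Mk n k)).

Definition rungs mt : 'I_n -> nat := fun l => mt l.

(* Ladder messages mt stand for independent original messages, buyer l's drawn from
   coord_law l (mt l); the ladder mechanism takes expectations. *)
Definition ladder (f : 'I_n -> profile M -> R) i mt : R :=
  \sum_(m : profile M) prod_law o alpha a (rungs mt) m * f i m.

Lemma ladder_is_mechanism q P :
  is_mechanism o q P -> is_mechanism (ok0 n k) (ladder q) (ladder P).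
Proof.
case=> q01 q_sum opt_out; have W_ge0 := prod_law_ge0 (o := o) alpha_ge0 a_gt0 a_large (rungs _).
split.
- move=> i mt; apply/andP; split.
    by apply: sumr_ge0 => m _; rewrite mulr_ge0 //; case/andP: (q01 i m).
  rewrite -(prod_law_sum1 o alpha a (rungs mt)); apply: ler_sum => m _.
  by rewrite ler_piMr //; case/andP: (q01 i m).
- move=> mt; rewrite exchange_big /= -(prod_law_sum1 o alpha a (rungs mt)).
  by apply: ler_sum => m _; rewrite -mulr_sumr ler_piMr.
- move=> i mt mt_i.
  have vanish f : (forall m : profile M, m i = o i -> f i m = 0) -> ladder f i mt = 0.
    move=> f0; apply: big1 => m _; rewrite (prod_lawE _ i) /rungs mt_i /=.
    by case: eqP => [/f0 ->|_]; rewrite ?mulr0 ?mul0r.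
  by split; apply: vanish => m /(opt_out i m) [].
Qed.

Lemma prod_law_rungs_upd mt i (x : Mk n k i) m :
  prod_law o alpha a (rungs (upd mt x)) m
  = coord_law o alpha a i x (m i) * prod_law_but o alpha a (rungs mt) i m.
Proof.
rewrite (prod_lawE _ i) /rungs updE; congr (_ * _).
by apply: eq_bigr => l li; rewrite updO // eq_sym.
Qed.

Lemma util_ladder q P i v mt (x : Mk n k i) :
  util (ladder q) (ladder P) i v (upd mt x)
  = expect_at o alpha a (rungs mt) i (coord_law o alpha a i x) (util q P i v).
Proof.
rewrite /util /ladder /expect_at mulr_sumr -sumrB; apply: eq_bigr => m _.
by rewrite prod_law_rungs_upd; ring.
Qed.

Lemma ladder_buyer_revenue_ge q P i v mt B eps :
  0 <= eps -> (forall m, `|util q P i v m| <= B) -> a * (B * binom_tv R k) <= eps ->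
  \sum_(m : profile M) prod_law o alpha a (rungs mt) m * buyer_revenue q P alpha i v m - eps
  <= buyer_revenue (ladder q) (ladder P) (alpha_succ a) i v mt.
Proof.
move=> eps_ge0 U_le small.
set E := fun j => expect_at o alpha a (rungs mt) i (coord_law o alpha a i j) (util q P i v).
have mean : \sum_(m : profile M) prod_law o alpha a (rungs mt) m * buyer_revenue q P alpha i v m
    = ladder P i mt + a * (E (mt i).+1 - E (mt i)).
  rewrite /E expect_atS_sub // mulrA mulfV ?gt_eqF // mul1r /ladder /expect_at -big_split /=.
  apply: eq_bigr => m _; rewrite !(prod_lawE _ i) /buyer_revenue mulrDr; congr (_ + _).
  by congr (_ * _); apply: eq_bigr => x _; rewrite mulrC.
have U_mt : util (ladder q) (ladder P) i v mt = E (mt i).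
  by rewrite -{1}(upd_id mt i) util_ladder.
rewrite mean /buyer_revenue sum_alpha_succ U_mt; case: ltnP => [lt_k | ge_k].
  rewrite util_ladder inordK // mulrC -/E lerBlDr lerDl //.
(* At the top rung there is no upward deviation: the drift term is the error. *)
rewrite addr0 -addrA gerDl subr_le0; apply: le_trans small.
have -> : (mt i : nat) = k by apply/eqP; rewrite eqn_leq ge_k -ltnS ltn_ord.
rewrite ler_wpM2l ?(ltW a_gt0) //; apply: le_trans (ler_norm _) _.
exact: expect_atS_sub_le.
Qed.

Lemma ladder_virtual_revenue_ge q P v B eps mt :
  0 <= eps -> (forall i m, `|util q P i v m| <= B) -> a * (B * binom_tv R k) <= eps ->
  min_revenue o q P alpha v - n%:R * eps <= virtual_revenue (ladder q) (ladder P) (alpha_succ a) v mt.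
Proof.
move=> eps_ge0 U_le small; rewrite virtual_revenueE.
apply: le_trans (ler_sum _ (fun i _ => ladder_buyer_revenue_ge _ _ i _ mt _ _ eps_ge0 (U_le i) small)).
rewrite sumrB sumr_const card_ord mulr_natl lerD2r exchange_big /=.
under [X in _ <= X]eq_bigr do rewrite -mulr_sumr -virtual_revenueE.
rewrite -[X in X <= _]mul1r -(prod_law_sum1 o alpha a (rungs mt)) mulr_suml.
apply: ler_sum => m _; apply: ler_wpM2l; last exact: bigmin_le.
exact: prod_law_ge0.
Qed.

End Ladder.

Arguments ladder {R n M} o alpha a k f i mt.
Arguments ladder_virtual_revenue_ge {R n M o alpha a k} alpha_ge0 a_gt0 a_large q P v B eps mt.

Lemma ler_sum_term {R : numDomainType} {I : finType} (F : I -> R) j :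
  (forall i, 0 <= F i) -> F j <= \sum_i F i.
Proof. by move=> F_ge0; rewrite (bigD1 j) //= lerDl sumr_ge0. Qed.

(* C(2m, m) / 4^m <= 1 / sqrt(m + 1) tends to 0. *)
Lemma bin_central_ratio_small (R : archiRealFieldType) (C eps : R) : 0 < eps ->
  exists m, (0 < m)%N /\ C * ('C(2 * m, m)%:R / (4 ^ m)%:R) <= eps.
Proof.
move=> eps_gt0; set u := `|C| / eps.
have u_ge0 : 0 <= u by rewrite divr_ge0 // ltW.
set m := (Num.Def.archi_bound (u ^+ 2)).+1; exists m; split => //.
set c := _ / _; have c_ge0 : 0 <= c by rewrite divr_ge0.
have uc_le1 : (u * c) ^+ 2 <= 1.
  apply: le_trans (bin_central_ratio_sq_le R m); rewrite exprMn mulrC ler_wpM2l ?sqr_ge0 //.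
  apply/ltW/(lt_le_trans (archi_boundP (sqr_ge0 u))).
  by rewrite ler_nat leqW // leqnSn.
rewrite expr_le1 ?(mulr_ge0 u_ge0 c_ge0) // /u mulrAC ler_pdivrMr // mul1r in uc_le1.
by apply: le_trans uc_le1; rewrite ler_wpM2r // ler_norm.
Qed.

Lemma inV_01 (R : archiRealFieldType) N (v : R) : inV N v -> 0 <= v <= 1.
Proof.
case=> j ->; rewrite divr_ge0 //=; case: N j => [|N] j; first by rewrite invr0 mulr0.
by rewrite ler_pdivrMr ?ltr0n // mul1r ler_nat -ltnS.
Qed.

Lemma ladder_approximation (R : archiRealFieldType) (n N : nat)
    (M : 'I_n -> finType) (o : forall i, M i)
    (q P : 'I_n -> profile M -> R) (alpha : forall i, M i -> M i -> R) :
  is_mechanism o q P -> (forall i x y, 0 <= alpha i x y) ->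
  forall eps : R, 0 < eps ->
  exists (a : R) (k : nat) (qt Pt : 'I_n -> profile (Mk n k) -> R),
    [/\ 0 < a, (1 <= k)%N, is_mechanism (ok0 n k) qt Pt &
        forall v : R, inV N v -> forall mt : profile (Mk n k),
          min_revenue o q P alpha v - n%:R * eps
            <= virtual_revenue qt Pt (alpha_succ a) v mt].
Proof.
move=> mech alpha_ge0 eps eps_gt0.
pose A := \sum_(i < n) \sum_(y : M i) \sum_(x : M i) alpha i x y.
pose a := 1 + 2 * A.
have A_ge0 : 0 <= A by do 3! (apply: sumr_ge0 => ? _).
have a_gt0 : 0 < a by rewrite ltr_pwDl ?mulr_ge0.
have a_large i y : 2 * \sum_(x : M i) alpha i x y <= a.
  apply: ler_wpDl => //; rewrite ler_wpM2l //.
  apply: le_trans (ler_sum_term _ i _); last by move=> l; do 2! (apply: sumr_ge0 => ? _).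
  by apply: ler_sum_term => z; apply: sumr_ge0.
pose B := 1 + \sum_(i < n) \sum_(m : profile M) `|P i m|.
have U_le v : inV N v -> forall i m, `|util q P i v m| <= B.
  move=> /inV_01 /andP[v_ge0 v_le1] i m; apply: le_trans (ler_normB _ _) _.
  apply: lerD.
    case: mech => q01 _ _; case/andP: (q01 i m) => q_ge0 q_le1.
    by rewrite normrM !ger0_norm // mulr_ile1.
  apply: le_trans (ler_sum_term (fun m => `|P i m|) m _) _ => //.
  by apply: ler_sum_term (fun i => \sum_(m : profile M) `|P i m|) i _ => l; apply: sumr_ge0.
have [m [m_gt0 small]] := bin_central_ratio_small R (a * B) eps eps_gt0.
exists a, (2 * m)%N, (ladder o alpha a (2 * m) q), (ladder o alpha a (2 * m) P).
split; [done | lia | exact: ladder_is_mechanism |].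
move=> v v_in mt.
apply: (ladder_virtual_revenue_ge alpha_ge0 a_gt0 a_large _ _ _ B).
- exact: ltW.
- exact: U_le.
- by rewrite binom_tv_double mulrA.
Qed.

Section Symmetrization.
Variables (R : archiRealFieldType) (n k : nat) (beta : 'I_k.+1 -> 'I_k.+1 -> R)
  (q P : 'I_n -> profile (Mk n k) -> R) (v : R).
Let alpha : forall i, Mk n k i -> Mk n k i -> R := fun _ => beta.

(* Buyer s j sends what buyer j sent in m. *)
Definition relabel (s : 'S_n) (m : profile (Mk n k)) : profile (Mk n k) :=
  finfun (fun j : 'I_n => m ((s^-1)%g j)).

Lemma relabel_perm s m i : relabel s m (s i) = m i.
Proof. by rewrite /relabel ffunE permK. Qed.

Lemma relabel_upd s m i (x : Mk n k i) :
  relabel s (upd m x) = upd (i := s i) (relabel s m) x.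
Proof.
apply/ffunP => j; rewrite /relabel /upd !ffunE.
have [<-|ne] := eqVneq (s i) j; first by rewrite permK !dfwith_in.
rewrite !dfwith_out ?ffunE //.
by apply: contra ne => /eqP ->; rewrite permKV.
Qed.

Lemma util_symmetrize i m :
  util (symmetrize q) (symmetrize P) i v m
  = (n`!%:R)^-1 * \sum_(s : 'S_n) util q P (s i) v (relabel s m).
Proof.
rewrite /util /symmetrize mulrA (mulrC v) -mulrA mulr_sumr -mulrBr -sumrB.
by congr (_ * _); apply: eq_bigr => s _; rewrite /relabel; ring.
Qed.

Lemma buyer_revenue_symmetrize i m :
  buyer_revenue (symmetrize q) (symmetrize P) alpha i v m
  = (n`!%:R)^-1 * \sum_(s : 'S_n) buyer_revenue q P alpha (s i) v (relabel s m).
Proof.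
rewrite /buyer_revenue big_split /= mulrDr; congr (_ + _).
under eq_bigr do rewrite !util_symmetrize -mulrBr -sumrB -mulrA mulr_suml.
rewrite -mulr_sumr exchange_big /=; congr (_ * _); apply: eq_bigr => s _.
by apply: eq_bigr => x _; rewrite relabel_upd relabel_perm.
Qed.

Lemma virtual_revenue_symmetrize m :
  virtual_revenue (symmetrize q) (symmetrize P) alpha v m
  = (n`!%:R)^-1 * \sum_(s : 'S_n) virtual_revenue q P alpha v (relabel s m).
Proof.
rewrite virtual_revenueE (eq_bigr _ (fun i _ => buyer_revenue_symmetrize i m)).
rewrite -mulr_sumr exchange_big /=; congr (_ * _); apply: eq_bigr => s _.
by rewrite virtual_revenueE [RHS](reindex_inj (@perm_inj _ s)).
Qed.

Lemma symmetrize_revenue_ge m :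
  min_revenue (ok0 n k) q P alpha v <= virtual_revenue (symmetrize q) (symmetrize P) alpha v m.
Proof.
rewrite virtual_revenue_symmetrize ler_pdivlMl ?ltr0n ?fact_gt0 //.
rewrite mulr_natl -card_Sn -sumr_const; apply: ler_sum => s _; exact: bigmin_le.
Qed.

End Symmetrization.

Theorem mainTheorem6 (R : archiRealFieldType) (n N : nat) (hN : (0 < N)%N) :
  (forall (M : 'I_n -> finType) (o : forall i, M i)
          (q P : 'I_n -> profile M -> R) (alpha : forall i, M i -> M i -> R),
      is_mechanism o q P ->
      (forall i x y, 0 <= alpha i x y) ->
      forall eps : R, 0 < eps ->
      exists (a : R) (k : nat) (qt Pt : 'I_n -> profile (Mk n k) -> R),
        [/\ 0 < a, (1 <= k)%N, is_mechanism (ok0 n k) qt Pt &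
            forall v : R, inV N v -> forall mt : profile (Mk n k),
              min_revenue o q P alpha v - n%:R * eps
                <= virtual_revenue qt Pt (alpha_succ a) v mt])
  /\
  (forall (k : nat) (a : R) (q P : 'I_n -> profile (Mk n k) -> R),
      0 < a -> is_mechanism (ok0 n k) q P ->
      forall v : R, inV N v -> forall m : profile (Mk n k),
        min_revenue (ok0 n k) q P (alpha_succ a) v
          <= virtual_revenue (symmetrize q) (symmetrize P) (alpha_succ a) v m).
Proof.
split=> [M o q P alpha | k a q P _ _ v _ m]; first exact: ladder_approximation.
exact: (symmetrize_revenue_ge R n k (fun j' j : 'I_k.+1 => if (j' : nat) == j.+1 then a else 0) q P v m).
Qed.
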